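(* Let $ABC$ be a triangle with circumcenter $O$, orthocenter $H$, and orthic triangle $A_HB_HC_H$ (the feet of the altitudes from $A, B, C$). Let $A^*, B^*, C^*$ be the feet of the perpendiculars from $O$ to the lines $AH, BH, CH$ respectively. If line $AO$ meets line $B_HC_H$ at $J$, then the orthocenter $H^*$ of triangle $A^*B^*C^*$ lies on line $A_HJ$. *)

From mathcomp Require Import all_boot all_order all_algebra.
Set Implicit Arguments. Unset Strict Implicit. Unset Printing Implicit Defensive.
Import Order.TTheory GRing.Theory Num.Theory.
Local Open Scope ring_scope.

Definition point (R : realFieldType) := (R * R)%type.

Section Geom.
Variable R : realFieldType.
Implicit Types P Q A B C : point R.

Definition vsub P Q : point R := (P.1 - Q.1, P.2 - Q.2).
Definition dot P Q : R := P.1 * Q.1 + P.2 * Q.2.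
Definition cross P Q : R := P.1 * Q.2 - P.2 * Q.1.

(* P, Q, X collinear (X lies on line PQ when P <> Q) *)
Definition collinear P Q X : Prop := cross (vsub Q P) (vsub X P) = 0.

Definition sqdist P Q : R := dot (vsub P Q) (vsub P Q).

(* foot of the perpendicular from P onto line AB (A <> B) *)
Definition foot P A B : point R :=
  let u := vsub B A in
  let t := dot (vsub P A) u / dot u u in
  (A.1 + t * u.1, A.2 + t * u.2).

Definition is_circumcenter O A B C : Prop :=
  sqdist O A = sqdist O B /\ sqdist O A = sqdist O C.

Definition is_orthocenter H A B C : Prop :=
  dot (vsub H A) (vsub C B) = 0 /\ dot (vsub H B) (vsub C A) = 0 /\
  dot (vsub H C) (vsub B A) = 0.
End Geom.

From mathcomp Require Import all_boot all_order all_algebra.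
From mathcomp Require Import ring.
Set Implicit Arguments. Unset Strict Implicit. Unset Printing Implicit Defensive.
Import Order.TTheory GRing.Theory Num.Theory.
Local Open Scope ring_scope.

(* A similarity moves the foot A_H to the origin and BC onto the x-axis, so
   that A = (0, a), B = (b, 0), C = (c, 0), O = ((b + c)/2, (a^2 + bc)/2a) and
   H = (0, -bc/a).  Each of A*, B*, C* sees OH at a right angle, so they lie on
   the circle with diameter OH and Sylvester's relation gives
   H* = A* + B* + C* - O - H.  Since AO is perpendicular to B_H C_H, the point J
   is well defined, and the concurrence of AO, B_H C_H and A_H H* becomes the
   vanishing of a determinant, a rational identity in a, b, c. *)

Section Plane.
Variable R : realFieldType.
Implicit Types (u v w P Q T X Y Z A B C H M N : point R).

Definition vadd P Q : point R := (P.1 + Q.1, P.2 + Q.2).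

Lemma pointP P Q : P.1 = Q.1 -> P.2 = Q.2 -> P = Q.
Proof. by case: P Q => [? ?] [? ?] /= -> ->. Qed.

Lemma vsub_eq0 P Q : vsub P Q = (0, 0) -> P = Q.
Proof.
by case=> /eqP; rewrite subr_eq0 => /eqP e1 /eqP; rewrite subr_eq0 => /eqP /(pointP e1).
Qed.

Lemma sqr_add_neq0 (x y : R) : x != 0 -> x ^+ 2 + y ^+ 2 != 0.
Proof. by move=> x0; rewrite paddr_eq0 ?sqr_ge0 // sqrf_eq0 (negbTE x0). Qed.

Lemma dot_self_eq0 u : dot u u = 0 -> u = (0, 0).
Proof.
case: u => x y; rewrite /dot /= -!expr2 => /eqP.
by rewrite paddr_eq0 ?sqr_ge0 // !sqrf_eq0 => /andP[/eqP -> /eqP ->].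
Qed.

Lemma dot_vsub_neq0 P Q : P <> Q -> dot (vsub P Q) (vsub P Q) != 0.
Proof. by move=> PQ; apply/eqP => /dot_self_eq0 /vsub_eq0. Qed.

Lemma dot_cross_sqr u v : dot u v ^+ 2 + cross u v ^+ 2 = dot u u * dot v v.
Proof. by rewrite /dot /cross; ring. Qed.

Lemma perp_cross_neq0 u v : u <> (0, 0) -> v <> (0, 0) -> dot u v = 0 -> cross u v != 0.
Proof.
move=> u0 v0 uv; apply/eqP => cuv.
have /eqP := dot_cross_sqr u v; rewrite uv cuv expr0n add0r eq_sym mulf_eq0.
by case/orP => /eqP /dot_self_eq0.
Qed.

Lemma perp2_eq0 u v X : cross u v != 0 -> dot X u = 0 -> dot X v = 0 -> X = (0, 0).
Proof.
move=> uv Xu Xv.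
have e1 : X.1 * cross u v = v.2 * dot X u - u.2 * dot X v by rewrite /dot /cross; ring.
have e2 : X.2 * cross u v = u.1 * dot X v - v.1 * dot X u by rewrite /dot /cross; ring.
rewrite Xu Xv !mulr0 subrr in e1 e2.
by apply: pointP; apply/eqP; rewrite -(mulIr_eq0 _ (mulIf uv)) ?e1 ?e2.
Qed.

Lemma noncollinear_distinct A B C : ~ collinear A B C -> [/\ A <> B, B <> C & C <> A].
Proof. by move=> nc; split=> E; apply: nc; rewrite /collinear /cross /vsub E /=; ring. Qed.

Lemma circumcenter_unique A B C O1 O2 :
  ~ collinear A B C -> is_circumcenter O1 A B C -> is_circumcenter O2 A B C -> O1 = O2.
Proof.
move=> nc [O1B O1C] [O2B O2C]; apply: vsub_eq0.
have perp P : sqdist O1 A = sqdist O1 P -> sqdist O2 A = sqdist O2 P ->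
    dot (vsub O1 O2) (vsub P A) = 0.
  move=> O1P O2P.
  have : 2 * dot (vsub O1 O2) (vsub P A) =
         (sqdist O1 A - sqdist O1 P) - (sqdist O2 A - sqdist O2 P).
    by rewrite /sqdist /dot /vsub /=; ring.
  by rewrite O1P O2P !subrr => /eqP; rewrite mulf_eq0 pnatr_eq0 => /eqP.
by apply: (perp2_eq0 _ (perp B O1B O2B) (perp C O1C O2C)); apply/eqP.
Qed.

Lemma orthocenter_unique A B C H1 H2 :
  ~ collinear A B C -> is_orthocenter H1 A B C -> is_orthocenter H2 A B C -> H1 = H2.
Proof.
move=> nc [H1A [H1B _]] [H2A [H2B _]]; apply: vsub_eq0.
have diff P Q : dot (vsub H1 P) Q = 0 -> dot (vsub H2 P) Q = 0 -> dot (vsub H1 H2) Q = 0.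
  move=> e1 e2; rewrite -[RHS](subrr 0) -{1}e1 -e2 /dot /vsub /=; ring.
apply: (perp2_eq0 _ (diff _ _ H1A H2A) (diff _ _ H1B H2B)); apply/eqP => e; apply: nc.
transitivity (- cross (vsub C B) (vsub C A)); last by rewrite e oppr0.
by rewrite /cross /vsub /=; ring.
Qed.

Lemma circumcenter_neq_vertex A B C M : ~ collinear A B C -> is_circumcenter M A B C -> M <> A.
Proof.
move=> /noncollinear_distinct[AB _ _] [MB _] MA; subst M.
apply: AB; apply/vsub_eq0/dot_self_eq0.
by rewrite -[LHS]/(sqdist A B) -MB /sqdist /dot /vsub /= subrr; ring.
Qed.

(* X, Y, Z lie on the circle with center (M + N) / 2, and Sylvester's relation
   gives their orthocenter as X + Y + Z - 2 * (M + N) / 2. *)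
Lemma orthocenter_of_diameter M N X Y Z :
  dot (vsub X M) (vsub X N) = 0 -> dot (vsub Y M) (vsub Y N) = 0 ->
  dot (vsub Z M) (vsub Z N) = 0 ->
  is_orthocenter (vsub (vadd (vadd X Y) Z) (vadd M N)) X Y Z.
Proof.
move=> hX hY hZ; split; [|split].
- transitivity (dot (vsub Z M) (vsub Z N) - dot (vsub Y M) (vsub Y N)).
    by rewrite /dot /vsub /vadd /=; ring.
  by rewrite hZ hY subrr.
- transitivity (dot (vsub Z M) (vsub Z N) - dot (vsub X M) (vsub X N)).
    by rewrite /dot /vsub /vadd /=; ring.
  by rewrite hZ hX subrr.
- transitivity (dot (vsub Y M) (vsub Y N) - dot (vsub X M) (vsub X N)).
    by rewrite /dot /vsub /vadd /=; ring.
  by rewrite hY hX subrr.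
Qed.

Lemma dot_foot_diameter P A B : B <> A -> dot (vsub (foot P A B) P) (vsub (foot P A B) B) = 0.
Proof. move/dot_vsub_neq0; rewrite /foot /dot /vsub /= => nz; field; exact: nz. Qed.

(* With A at the origin, 2 M.B = |B|^2, 2 M.C = |C|^2, and the feet are
   C_H = (B.C / |B|^2) B and B_H = (B.C / |C|^2) C. *)
Lemma orthic_side_perp A B C M : is_circumcenter M A B C -> B <> A -> C <> A ->
  dot (vsub M A) (vsub (foot C A B) (foot B C A)) = 0.
Proof.
move=> [MB MC] BA CA.
have nAB := dot_vsub_neq0 BA; have nCA := dot_vsub_neq0 (not_eq_sym CA).
transitivity (dot (vsub B A) (vsub C A) / 2 *
  ((sqdist M A - sqdist M B) / dot (vsub B A) (vsub B A) -
   (sqdist M A - sqdist M C) / dot (vsub A C) (vsub A C))).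
  move: nAB nCA; rewrite /foot /sqdist /dot /vsub /= => nAB nCA; by field; apply/andP.
by rewrite -MB -MC !subrr !mul0r subrr mulr0.
Qed.

Definition concurrence_det P1 P2 Q1 Q2 Z W : R :=
  let u := vsub P2 P1 in let v := vsub Q2 Q1 in let w := vsub W Z in
  cross u v * cross w (vsub P1 Z) + cross w u * cross v (vsub P1 Q1).

(* The affine function X |-> cross u v * cross w (X - Z) + cross v w *
   cross u (X - P1) + cross w u * cross v (X - Q1) is constant, equal to its
   value [concurrence_det] at P1. *)
Lemma collinear_concurrent P1 P2 Q1 Q2 Z W J :
  cross (vsub P2 P1) (vsub Q2 Q1) != 0 -> collinear P1 P2 J -> collinear Q1 Q2 J ->
  concurrence_det P1 P2 Q1 Q2 Z W = 0 -> collinear Z J W.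
Proof.
rewrite /concurrence_det /collinear.
set u := vsub P2 P1; set v := vsub Q2 Q1; set w := vsub W Z => uv J1 J2 D.
have : cross u v * cross (vsub J Z) w =
       cross v w * cross u (vsub J P1) + cross w u * cross v (vsub J Q1) -
       (cross u v * cross w (vsub P1 Z) + cross w u * cross v (vsub P1 Q1)).
  by rewrite /u /v /w /cross /vsub /=; ring.
rewrite J1 J2 D !mulr0 !add0r oppr0 => /eqP.
by rewrite mulf_eq0 (negbTE uv) => /eqP.
Qed.

Definition coord u v : point R := (dot u v, cross u v).

(* Coordinates of X in the orthonormal frame at T with first axis u / |u|,
   scaled by |u|: a similarity of ratio |u|. *)
Definition frame u T X : point R := coord u (vsub X T).

Lemma vsub_frame u T X Y : vsub (frame u T X) (frame u T Y) = coord u (vsub X Y).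
Proof. by apply: pointP; rewrite /frame /coord /dot /cross /vsub /=; ring. Qed.

Lemma dot_coord u v w : dot (coord u v) (coord u w) = dot u u * dot v w.
Proof. by rewrite /coord /dot /cross /=; ring. Qed.

Lemma cross_coord u v w : cross (coord u v) (coord u w) = dot u u * cross v w.
Proof. by rewrite /coord /dot /cross /=; ring. Qed.

Section Frame.
Variables u T : point R.
Hypothesis u0 : dot u u != 0.
Local Notation F := (frame u T).

Lemma collinear_frame P Q X : collinear (F P) (F Q) (F X) <-> collinear P Q X.
Proof.
rewrite /collinear !vsub_frame cross_coord; split=> [/eqP|->]; last by rewrite mulr0.
by rewrite mulf_eq0 (negbTE u0) => /eqP.
Qed.

Lemma circumcenter_frame M A B C :
  is_circumcenter M A B C -> is_circumcenter (F M) (F A) (F B) (F C).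
Proof. by rewrite /is_circumcenter /sqdist !vsub_frame !dot_coord => -[-> ->]. Qed.

Lemma orthocenter_frame H A B C :
  is_orthocenter H A B C -> is_orthocenter (F H) (F A) (F B) (F C).
Proof. by rewrite /is_orthocenter !vsub_frame !dot_coord => -[-> [-> ->]]; rewrite !mulr0. Qed.

Lemma foot_frame P A B : foot (F P) (F A) (F B) = F (foot P A B).
Proof.
rewrite /foot !vsub_frame !dot_coord -mulf_div divff // mul1r.
by set t := _ / _; apply: pointP; rewrite /frame /coord /dot /cross /vsub /=; ring.
Qed.

Lemma frame_inj : injective F.
Proof.
move=> X Y FXY; apply/vsub_eq0/dot_self_eq0.
have := dot_coord u (vsub X Y) (vsub X Y).
rewrite -(vsub_frame u T) FXY /dot /vsub /= !subrr mulr0 addr0 => /esym/eqP.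
by rewrite mulf_eq0 (negbTE u0) => /eqP.
Qed.
End Frame.

Lemma frame_altitude A B C : B <> C ->
  let F := frame (vsub C B) (foot A B C) in [/\ (F A).1 = 0, (F B).2 = 0 & (F C).2 = 0].
Proof.
move=> BC; move: (dot_vsub_neq0 (not_eq_sym BC)).
rewrite /frame /coord /foot /dot /cross /vsub /= => nz.
by split; [field | ring | ring].
Qed.

Definition orthic_concurrence A B C O H J Hs : Prop :=
  ~ collinear A B C ->
  is_circumcenter O A B C ->
  is_orthocenter H A B C ->
  H <> A -> H <> B -> H <> C ->
  let AH := foot A B C in
  let BH := foot B C A in
  let CH := foot C A B in
  let As := foot O A H in
  let Bs := foot O B H in
  let Cs := foot O C H in
  BH <> CH ->
  collinear A O J -> collinear BH CH J ->
  ~ collinear As Bs Cs ->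
  is_orthocenter Hs As Bs Cs ->
  collinear AH J Hs.

Lemma orthic_concurrence_frame A B C O H J Hs :
  let F := frame (vsub C B) (foot A B C) in
  (B <> C -> orthic_concurrence (F A) (F B) (F C) (F O) (F H) (F J) (F Hs)) ->
  orthic_concurrence A B C O H J Hs.
Proof.
move=> F conc nc circ orth HA HB HC AH BH CH As Bs Cs BHCH J1 J2 ncs orths.
have [_ BC _] := noncollinear_distinct nc.
have u0 := dot_vsub_neq0 (not_eq_sym BC).
have neqF X Y : X <> Y -> F X <> F Y by move=> XY /(frame_inj u0).
rewrite /AH -(collinear_frame _ u0) -foot_frame //.
apply: (conc BC); rewrite ?foot_frame ?collinear_frame //;
  by [apply: neqF | apply: circumcenter_frame | apply: orthocenter_frame].
Qed.

Lemma circumcenter_normal (a b c : R) : a != 0 ->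
  is_circumcenter ((b + c) / 2, (a ^+ 2 + b * c) / (2 * a)) (0, a) (b, 0) (c, 0).
Proof. by move=> a0; split; rewrite /sqdist /dot /vsub /=; field. Qed.

Lemma orthocenter_normal (a b c : R) : a != 0 ->
  is_orthocenter (0, - (b * c) / a) (0, a) (b, 0) (c, 0).
Proof. by move=> a0; split; [|split]; rewrite /dot /vsub /=; field. Qed.

Lemma concurrence_det_normal (a b c : R) :
  a != 0 -> b != 0 -> c != 0 -> b != c -> a ^+ 2 + b * c != 0 ->
  let A := (0, a) in let B := (b, 0) in let C := (c, 0) in
  let M := ((b + c) / 2, (a ^+ 2 + b * c) / (2 * a)) in
  let H := (0, - (b * c) / a) in
  let Hs := vsub (vadd (vadd (foot M A H) (foot M B H)) (foot M C H)) (vadd M H) in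
  concurrence_det A M (foot B C A) (foot C A B) (foot A B C) Hs = 0.
Proof.
move=> a0 b0 c0 bc k0.
rewrite /concurrence_det /foot /vadd /cross /dot /vsub /=.
(* field's side conditions: sums of squares, b - c, a and a^2 + bc *)
field.
rewrite !mulrNN -!expr2 -!exprMn !sqr_add_neq0 ?mulf_neq0 // subr_eq0 eq_sym bc a0.
by rewrite mulNr -opprD oppr_eq0 addrC -expr2 k0.
Qed.

Lemma orthic_concurrence_normal A B C O H J Hs :
  A.1 = 0 -> B.2 = 0 -> C.2 = 0 -> orthic_concurrence A B C O H J Hs.
Proof.
case: A B C => [_ a] [b _] [c _] /= -> -> ->.
move=> nc circ orth HA HB HC AH BH CH As Bs Cs BHCH J1 J2 ncs orths.
have [AB BC CA] := noncollinear_distinct nc.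
have a0 : a != 0 by apply/eqP => a0; apply: nc; rewrite /collinear /cross /vsub /= a0; ring.
have bc : b != c by apply/eqP => e; apply: BC; rewrite e.
have eO := circumcenter_unique nc circ (circumcenter_normal b c a0).
have eH := orthocenter_unique nc orth (orthocenter_normal b c a0).
have b0 : b != 0 by apply/eqP => b0; apply: HB; rewrite eH b0 mul0r oppr0 mul0r.
have c0 : c != 0 by apply/eqP => c0; apply: HC; rewrite eH c0 mulr0 oppr0 mul0r.
have k0 : a ^+ 2 + b * c != 0.
  apply/eqP => /eqP; rewrite addrC addr_eq0 => /eqP k; apply: HA.
  by rewrite eH k opprK mulfK.
have eHs := orthocenter_unique ncs orths (orthocenter_of_diameter
  (dot_foot_diameter _ HA) (dot_foot_diameter _ HB) (dot_foot_diameter _ HC)).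
apply: (collinear_concurrent _ J1 J2).
  apply: perp_cross_neq0; last exact: orthic_side_perp circ (not_eq_sym AB) CA.
  - by move/vsub_eq0; apply: circumcenter_neq_vertex circ.
  - by move/vsub_eq0/esym.
by rewrite eHs eO eH; exact: concurrence_det_normal.
Qed.
End Plane.

Theorem lemma4p1 (R : realFieldType) (A B C O H J Hs : point R) :
  ~ collinear A B C ->
  is_circumcenter O A B C ->
  is_orthocenter H A B C ->
  (* lines AH, BH, CH exist *)
  H <> A -> H <> B -> H <> C ->
  let AH := foot A B C in
  let BH := foot B C A in
  let CH := foot C A B in
  let As := foot O A H in
  let Bs := foot O B H in
  let Cs := foot O C H in
  (* line B_H C_H exists, and J is the intersection of lines AO and B_H C_H *)
  BH <> CH ->
  collinear A O J -> collinear BH CH J ->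
  (* H* is the orthocenter of the (nondegenerate) triangle A*B*C* *)
  ~ collinear As Bs Cs ->
  is_orthocenter Hs As Bs Cs ->
  collinear AH J Hs.
Proof.
apply: orthic_concurrence_frame => BC.
have [eA eB eC] := frame_altitude A BC.
exact: orthic_concurrence_normal.
Qed.
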